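(* Let $\mathbb{T}_S$ be a spherically symmetric tree with origin $\mathcal{O}$, and consider the cone percolation process on $\mathbb{T}_S$ with radius of influence $R$ satisfying $\mathbb{P}(R=k)=\frac{Z_\alpha}{(k+1)^\alpha}$ for $k=1,2,\dots$, where $\alpha>1$ and $Z_\alpha>0$ are constants. If $\dim\inf\partial\mathbb{T}_S>0$, then $\mathbb{P}(V)>0$.
   Context: Cone percolation process: Let $\mathbb{T}$ be a tree with origin $\mathcal{O}$ and graph distance $d(\cdot,\cdot)$. Write $u\le v$ if $u$ lies on the path from $\mathcal{O}$ to $v$. Let $R$ be a random variable with values in $\{0,1,2,\dots\}$, $p_k=\mathbb{P}(R=k)$, and assume $p_0\in(0,1)$. Let $\{R_v\}$ be i.i.d. copies of $R$ indexed by the vertices. For each vertex $u$ let $B_u=\{v: u\le v,\ d(u,v)\le R_u\}$. Set $I_0=\{\mathcal{O}\}$, $I_{n+1}=\bigcup_{u\in I_n}B_u$, $I=\bigcup_n I_n$; survival is the event $V=\{|I|=\infty\}$. A tree is spherically symmetric if any two vertices at the same distance from $\mathcal{O}$ have the same degree. For a vertex $u$ and $n\ge1$, $M_n(u)=|\{v: u\le v,\ d(v,\mathcal{O})=d(u,\mathcal{O})+n\}|$, and $\dim\inf\partial\mathbb{T}:=\lim_{n\to\infty}\min_{v}\frac1n\ln M_n(v)$ (assumed to exist). *)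

From HB Require Import structures.
From mathcomp Require Import all_boot all_order all_algebra.
From mathcomp Require Import all_classical all_reals all_analysis.
Set Implicit Arguments. Unset Strict Implicit. Unset Printing Implicit Defensive.
Import Order.TTheory GRing.Theory Num.Theory.
Local Open Scope classical_set_scope.
Local Open Scope ring_scope.

(* A spherically symmetric tree is encoded (up to isomorphism) by its offspring
   sequence c : every vertex at distance k from the origin has exactly c k
   children.  Vertices are the sequences [:: i_1; ...; i_n] with i_k < c (k-1);
   the origin is [::]; u <= v iff u is a prefix of v, and then d(u,v) = size v - size u;
   in general d(O, v) = size v. *)
Definition vtx (c : nat -> nat) (v : seq nat) : Prop :=
  forall k, (k < size v)%N -> (nth 0%N v k < c k)%N.

(* M_n(v) : number of descendants of v at distance n below v *)
Definition Mdesc (c : nat -> nat) (n : nat) (v : seq nat) : nat :=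
  (\prod_(size v <= k < size v + n) c k)%N.

Definition lnE {R : realType} (x : nat) : \bar R :=
  (if x == 0%N then -oo else (ln (x%:R : R))%:E)%E.

(* the n-th term of the limit defining dim inf of the boundary:
   inf over vertices v of (1/n) ln M_n(v) *)
Definition dim_term {R : realType} (c : nat -> nat) (n : nat) : \bar R :=
  ereal_inf [set (lnE (Mdesc c n v) * (n%:R^-1)%:E)%E | v in vtx c].

Definition cone (c : nat -> nat) (r : nat) (u : seq nat) : set (seq nat) :=
  [set v | vtx c v /\ prefix u v /\ (size v <= size u + r)%N].

Fixpoint Ilevel (c : nat -> nat) (Rad : seq nat -> nat) (n : nat) : set (seq nat) :=
  match n with
  | 0 => [set [::]]
  | n.+1 => \bigcup_(u in Ilevel c Rad n) cone c (Rad u) u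
  end.

Definition Iall (c : nat -> nat) (Rad : seq nat -> nat) : set (seq nat) :=
  \bigcup_n Ilevel c Rad n.

Definition survival {T : Type} (c : nat -> nat) (Rad : seq nat -> T -> nat) : set T :=
  [set w | ~ finite_set (Iall c (fun v => Rad v w))].

Definition mutually_independent {d : measure_display} {T : measurableType d}
  {R : realType} (P : probability T R) (X : seq nat -> T -> nat) (D : set (seq nat)) : Prop :=
  forall (s : seq (seq nat)) (A : seq nat -> set nat),
    uniq s -> (forall v, v \in s -> D v) ->
    P (\bigcap_(v in [set` s]) (X v @^-1` A v)) =
    (\prod_(v <- s) P (X v @^-1` A v))%E.

From HB Require Import structures.
From mathcomp Require Import all_boot all_order all_algebra.
From mathcomp Require Import all_classical all_reals all_analysis.
From mathcomp Require Import ring lra zify.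
Import Order.TTheory GRing.Theory Num.Theory.
Local Open Scope classical_set_scope.
Local Open Scope ring_scope.
Set Implicit Arguments. Unset Strict Implicit.

(* Positive [dim inf] gives a depth [K] such that every vertex has at least two
   descendants [K] generations below it; keeping at most two children per vertex,
   a vertex therefore has between [2 ^ m] and [2 ^ (K m)] pruned descendants at
   distance [K m].  Follow the radii [r_j = K 2 ^ e_j] with [e_j = e_0 + (K+1) j]:
   if the origin has radius [r_0] and, for every [j], every pruned vertex at depth
   [r_0 + ... + r_(j-1)] has a pruned descendant at distance [r_j] with radius
   [r_(j+1)], then the cone process reaches every depth.  A given vertex fails
   stage [j] with probability at most [(1 - P(R = r_(j+1))) ^ (2 ^ 2 ^ e_j)]; as
   [P(R = r)] decays only polynomially in [r], the union bound over the
   [2 ^ (r_0 + ... + r_(j-1))] vertices and over [j] stays below [P(R = r_0) / 2]. *)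

Section Schedule.
Local Open Scope nat_scope.

Lemma sqr_le_exp2 x : 4 <= x -> x * x <= 2 ^ x.
Proof.
move=> x_ge4; rewrite -(subnK x_ge4); elim: (x - 4) => [|n IH] //.
rewrite addSn expnS.
apply: (@leq_trans (2 * ((n + 4) * (n + 4)))); first by nia.
by rewrite leq_mul2l IH.
Qed.

Lemma linear_le_exp2 a b : exists x0, forall x, x0 <= x -> a * x + b <= 2 ^ x.
Proof.
exists (a + b + 4) => x x_ge.
have : x * x <= 2 ^ x by apply: sqr_le_exp2; lia.
have : a * x + b <= x * x by nia.
lia.
Qed.

Variables (K e0 : nat).
Definition sched_exp j := e0 + K.+1 * j.
Definition sched_radius j := K * 2 ^ sched_exp j.
Definition sched_depth j := \sum_(i < j) sched_radius i.

Lemma sched_expS j : sched_exp j.+1 = sched_exp j + K.+1.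
Proof. by rewrite /sched_exp mulnS; lia. Qed.

Lemma sched_depthS j : sched_depth j.+1 = sched_depth j + sched_radius j.
Proof. by rewrite /sched_depth big_ord_recr. Qed.

Lemma sched_depth_le j : 2 * sched_depth j <= 2 ^ sched_exp j.
Proof.
elim: j => [|j IH]; first by rewrite /sched_depth big_ord0.
rewrite sched_depthS sched_expS expnD /sched_radius.
have : 2 * K + 1 <= 2 ^ K.+1 by rewrite expnS; have := ltn_expl K (ltnSn 1); lia.
move/(leq_mul (leqnn (2 ^ sched_exp j))); nia.
Qed.

Lemma sched_radius_gt0 j : 0 < K -> 0 < sched_radius j.
Proof. by move=> K_gt0; rewrite muln_gt0 K_gt0 expn_gt0. Qed.

End Schedule.

Lemma sched_budget (K A N : nat) : exists e0, forall j,
  (N + sched_depth K e0 j + A * sched_exp K e0 j.+1 + A * e0 + j + 2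
    <= 2 ^ sched_exp K e0 j)%N.
Proof.
have [e0 e0_large] := linear_le_exp2 (4 * A + 2) (2 * (N + A * K.+1 + 2)).
exists e0 => j.
have := sched_depth_le K e0 j; rewrite sched_expS.
have e0_le : (e0 <= sched_exp K e0 j)%N by rewrite /sched_exp leq_addr.
have j_le : (j <= sched_exp K e0 j)%N by rewrite /sched_exp; nia.
have := e0_large _ e0_le; nia.
Qed.

Section PrunedTree.
Local Open Scope nat_scope.
Variable c : nat -> nat.

Lemma vtx_nil : vtx c [::].
Proof. by []. Qed.

Lemma vtx_nseq0 l : (forall k, k < l -> 0 < c k) -> vtx c (nseq l 0).
Proof. by move=> c_gt0 k; rewrite size_nseq => k_lt; rewrite nth_nseq k_lt c_gt0. Qed.

Lemma vtx_take v i : vtx c v -> vtx c (take i v).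
Proof.
move=> v_vtx k; rewrite size_take_min leq_min => /andP [k_lt_i k_lt].
by rewrite nth_take //; exact: v_vtx.
Qed.

(* Only the children 0 and 1 of each vertex are kept, so that a vertex has at
   most [2 ^ r] pruned descendants at distance [r]. *)
Fixpoint pruned_desc (u : seq nat) (r : nat) : seq (seq nat) :=
  if r is r'.+1 then
    [seq rcons w i | w <- pruned_desc u r', i <- iota 0 (minn (c (size u + r')) 2)]
  else [:: u].

Lemma size_pruned_desc_mem u r w : w \in pruned_desc u r -> size w = size u + r.
Proof.
elim: r w => [|r IH] w /=; first by rewrite inE addn0 => /eqP ->.
case/allpairsP => [[w' i]] /= [/IH w'_size _ ->].
by rewrite size_rcons w'_size addnS.
Qed.

Lemma pruned_desc_uniq u r : uniq (pruned_desc u r).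
Proof.
elim: r => [|r IH] //=; apply: allpairs_uniq => //; first exact: iota_uniq.
by move=> [a b] [a' b'] _ _ /= /rcons_inj [-> ->].
Qed.

Lemma size_pruned_desc u r :
  size (pruned_desc u r) = \prod_(size u <= k < size u + r) minn (c k) 2.
Proof.
elim: r => [|r IH] /=; first by rewrite addn0 big_geq.
by rewrite size_allpairs size_iota IH addnS big_nat_recr //= leq_addr.
Qed.

Lemma size_pruned_desc_le u r : size (pruned_desc u r) <= 2 ^ r.
Proof.
rewrite size_pruned_desc.
apply: (@leq_trans (\prod_(size u <= k < size u + r) 2)).
  by apply: leq_prod => i _; exact: geq_minr.
by rewrite prod_nat_const_nat addKn.
Qed.

Lemma pruned_desc_vtx u r w : vtx c u -> w \in pruned_desc u r -> vtx c w.
Proof.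
move=> u_vtx; elim: r w => [|r IH] w /=; first by rewrite inE => /eqP ->.
case/allpairsP => [[w' i]] /= [w'_in i_in ->] k.
rewrite size_rcons ltnS leq_eqVlt => /orP [/eqP ->|k_lt].
  rewrite nth_rcons ltnn eqxx; move: i_in.
  rewrite mem_iota add0n (size_pruned_desc_mem w'_in) => /andP [_ i_lt].
  exact: leq_trans i_lt (geq_minl _ _).
by rewrite nth_rcons k_lt; apply: IH.
Qed.

Lemma pruned_desc_prefix u r w : w \in pruned_desc u r -> prefix u w.
Proof.
elim: r w => [|r IH] w /=; first by rewrite inE => /eqP ->; rewrite prefix_refl.
case/allpairsP => [[w' i]] /= [w'_in _ ->].
exact: prefix_trans (IH _ w'_in) (prefix_rcons _ _).
Qed.

Lemma pruned_desc_trans v a u b w :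
  u \in pruned_desc v a -> w \in pruned_desc u b -> w \in pruned_desc v (a + b).
Proof.
move=> u_in; elim: b w => [|b IH] w /=; first by rewrite inE addn0 => /eqP ->.
case/allpairsP => [[w' i]] /= [w'_in i_in ->].
rewrite addnS /=; apply/allpairsP; exists (w', i); split => //; first exact: IH.
by rewrite (size_pruned_desc_mem u_in) -addnA in i_in.
Qed.

End PrunedTree.

Lemma branching_of_dim_gt0 (R : realType) c :
  (exists2 dim : R, 0 < dim & dim_term c @ \oo --> dim%:E) ->
  exists K, forall v, vtx c v -> (2 <= Mdesc c K v)%N.
Proof.
case=> dim dim_gt0 /fine_cvgP [dim_fin dim_cvg].
have dim_term_gt0 : \forall n \near \oo, 0 < fine (@dim_term R c n).
  exact: (@cvgr_gt R nat \oo _ (fine \o dim_term c) dim dim_cvg 0 dim_gt0).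
have [N _ HN] := filterI dim_fin dim_term_gt0.
have /= [fin_N pos_N] := HN N.+1 (leqW (leqnn N)).
exists N.+1 => v v_vtx.
have : (0 < @dim_term R c N.+1)%E by rewrite -(fineK fin_N) lte_fin.
have : (@dim_term R c N.+1 <= @lnE R (Mdesc c N.+1 v) * (N.+1%:R^-1)%:E)%E.
  by apply: ereal_inf_lbound; exists v.
move=> /[swap] /lt_le_trans /[apply].
rewrite /lnE; case: (Mdesc c N.+1 v) => [|[|m]] //=.
- by rewrite gt0_mulNye // lte_fin invr_gt0 ltr0n.
- by rewrite ln1 mul0e ltxx.
Qed.

Section Branching.
Local Open Scope nat_scope.
Variables (c : nat -> nat) (K : nat).
Hypothesis branching : forall v, vtx c v -> 2 <= Mdesc c K v.

Lemma branching_depth_gt0 : 0 < K.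
Proof. by have := branching (vtx_nil c); rewrite /Mdesc; case: (K) => //; rewrite big_geq. Qed.

Lemma branching_gt0 l : 0 < c l.
Proof.
have K_gt0 := branching_depth_gt0.
elim/ltn_ind: l => l IH.
have := branching (vtx_nseq0 IH).
rewrite /Mdesc size_nseq big_ltn; last by rewrite -{1}[l]addn0 ltn_add2l.
by case: (c l).
Qed.

Lemma prod_min2_ge2 (s : seq nat) (F : nat -> nat) : (forall i, 0 < F i) ->
  2 <= \prod_(i <- s) F i -> 2 <= \prod_(i <- s) minn (F i) 2.
Proof.
move=> F_gt0; elim: s => [|x s IH]; first by rewrite !big_nil.
rewrite !big_cons.
have prod_gt0 : 0 < \prod_(i <- s) minn (F i) 2.
  by apply: prodn_gt0 => i; rewrite leq_min F_gt0.
case: (leqP 2 (F x)) => [Fx_ge2 _|Fx_lt2]; first by rewrite -{1}(muln1 2) leq_mul2l.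
have -> : F x = 1 by have := F_gt0 x; case: (F x) Fx_lt2 => [|[|]].
by rewrite !mul1n => /IH.
Qed.

Lemma window_min2_ge2 l : 2 <= \prod_(l <= k < l + K) minn (c k) 2.
Proof.
apply: prod_min2_ge2; first exact: branching_gt0.
have := branching (@vtx_nseq0 c l (fun k _ => branching_gt0 k)).
by rewrite /Mdesc size_nseq.
Qed.

Lemma exp2_le_size_pruned_desc u m : 2 ^ m <= size (pruned_desc c u (K * m)).
Proof.
rewrite size_pruned_desc; elim: m => [|m IH]; first by rewrite muln0 addn0 big_geq.
rewrite mulnS (addnC K) addnA (@big_cat_nat _ _ _ (size u + K * m)) ?leq_addr //=.
by rewrite expnS mulnC leq_mul // window_min2_ge2.
Qed.

End Branching.

Section Estimates.
Variable R : realType.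

Lemma bernoulli_le1 (q : R) n : 0 <= q <= 1 -> (1 - q) ^+ n * (1 + n%:R * q) <= 1.
Proof.
move=> /andP [q_ge0 q_le1]; elim: n => [|n IH]; first by rewrite expr0 mul0r addr0 mulr1.
have x_ge0 : 0 <= (1 - q) ^+ n by apply: exprn_ge0; lra.
rewrite exprS -mulrA -natr1; set x := (1 - q) ^+ n in x_ge0 IH *.
have : 0 <= x * ((n%:R + 1) * q ^+ 2) by rewrite !mulr_ge0 ?sqr_ge0 //; lra.
have -> : (1 - q) * (x * (1 + (n%:R + 1) * q)) =
  x * (1 + n%:R * q) - x * ((n%:R + 1) * q ^+ 2) by ring.
lra.
Qed.

Lemma avoid_pow_le (q : R) (n a : nat) : 0 <= q <= 1 -> 2 ^- a <= q ->
  (1 - q) ^+ n * n%:R <= 2 ^+ a.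
Proof.
move=> q01 q_ge; have := bernoulli_le1 n q01.
have x_ge0 : 0 <= (1 - q) ^+ n by apply: exprn_ge0; case/andP: q01 => _; lra.
have qa_ge1 : 1 <= q * 2 ^+ a by rewrite -ler_pdivrMr ?exprn_gt0 // mul1r.
set x := (1 - q) ^+ n in x_ge0 *; set y := 2 ^+ a in qa_ge1 *.
have xn_ge0 : 0 <= x * n%:R by rewrite mulr_ge0.
have y_gt0 : 0 < y by rewrite exprn_gt0.
move=> bern; apply: (le_trans (y := x * n%:R * (q * y))).
  by rewrite -{1}[x * _]mulr1 ler_wpM2l.
have xnq_le1 : x * n%:R * q <= 1 by nra.
by rewrite mulrA -[X in _ <= X]mul1r ler_wpM2r // ltW.
Qed.

Lemma radius_law_ge (Z alpha : R) (K A D e : nat) :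
  0 < Z -> alpha <= A%:R -> (0 < K)%N ->
  ((2 * K) ^ A)%:R <= Z * 2 ^+ D ->
  2 ^- (D + A * e) <= Z / ((K * 2 ^ e).+1%:R `^ alpha).
Proof.
move=> Z_gt0 alpha_le K_gt0 ZD.
set x : R := (K * 2 ^ e).+1%:R.
have x_ge1 : 1 <= x by rewrite /x ler1n.
have x_le : x <= (2 * K)%:R * 2 ^+ e.
  by rewrite /x -natrX -natrM ler_nat -mulnA mulnC; have := expn_gt0 2 e; nia.
have xA_le : x `^ alpha <= Z * 2 ^+ (D + A * e).
  apply: le_trans (ler_powR x_ge1 alpha_le) _.
  have x_ge0 : 0 <= x by apply: le_trans x_ge1.
  rewrite powR_mulrn //.
  apply: le_trans (lerXn2r A _ _ x_le) _; rewrite ?nnegrE //.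
  rewrite natrX in ZD.
  by rewrite exprMn -exprM exprD mulrA (mulnC e) ler_wpM2r.
have xA_gt0 : 0 < x `^ alpha by rewrite powR_gt0 // (lt_le_trans ltr01).
by rewrite ler_pdivlMr // mulrC ler_pdivrMr ?exprn_gt0.
Qed.

Lemma union_avoid_le (q : R) (a b k L m n : nat) :
  0 <= q <= 1 -> 2 ^- a <= q -> (m <= 2 ^ L)%N -> (2 ^ b <= n)%N ->
  (L + a + k <= b)%N -> (1 - q) ^+ n *+ m <= 2 ^- k.
Proof.
move=> q01 q_ge m_le n_ge budget.
have x_ge0 : 0 <= (1 - q) ^+ n by apply: exprn_ge0; case/andP: q01 => _; lra.
have := avoid_pow_le n q01 q_ge; set x := (1 - q) ^+ n in x_ge0 *.
move=> xn_le; have xb_le : x * 2 ^+ b <= 2 ^+ a.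
  apply: le_trans xn_le; apply: ler_wpM2l => //.
  by rewrite -natrX ler_nat.
have xLk_le : x * 2 ^+ (L + k) <= 1.
  rewrite -(ler_pM2r (exprn_gt0 a (ltr0n R 2))) mul1r -mulrA -exprD.
  apply: le_trans xb_le; apply: ler_wpM2l => //.
  by rewrite ler_eXn2l ?ltr1n //; lia.
rewrite -mulr_natr -[2 ^- k]mul1r ler_pdivlMr ?exprn_gt0 //.
apply: le_trans xLk_le; rewrite exprD -mulrA ler_wpM2l // ler_wpM2r ?exprn_ge0 //.
by rewrite -natrX ler_nat.
Qed.

Lemma exists_ge_exp2 (x : R) : exists D : nat, x <= 2 ^+ D.
Proof.
exists (Num.truncn x); apply/ltW/(lt_le_trans (truncnS_gt x)).
by rewrite -natrX ler_nat ltn_expl.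
Qed.

End Estimates.

Lemma measurable_countable_bigcup d (T : measurableType d) (U : countType)
    (A : set U) (F : U -> set T) :
  (forall u, measurable (F u)) -> measurable (\bigcup_(u in A) F u).
Proof.
move=> mF; rewrite bigcup_mkcond; apply: countable_bigcupT_measurable.
  exact: countableP.
by move=> u; case: ifP => _ //; exact: measurable0.
Qed.

Lemma prob_bigcup_seq_le (R : realType) d (T : measurableType d)
    (P : probability T R) (I : choiceType) (s : seq I) (E : I -> set T) (x : R) :
  (forall u, u \in s -> measurable (E u)) -> (forall u, u \in s -> (P (E u) <= x%:E)%E) ->
  (P (\bigcup_(u in [set` s]) E u) <= (x *+ size s)%:E)%E.
Proof.
rewrite bigcup_seq; elim: s => [|a s IH] mE PE; first by rewrite big_nil measure0.
rewrite big_cons /= mulrS EFinD.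
have m_rest : measurable (\big[setU/set0]_(t <- s) E t).
  rewrite -bigcup_seq; apply: fin_bigcup_measurable; first by apply/finite_seqP; exists s.
  by move=> u /= u_in; apply: mE; rewrite inE u_in orbT.
apply: le_trans (measureU2 _ _ _) _ => //; first by apply: mE; rewrite inE eqxx.
apply: leeD; first by apply: PE; rewrite inE eqxx.
by apply: IH => u u_in; [apply: mE | apply: PE]; rewrite inE u_in orbT.
Qed.

Section Percolation.
Variables (R : realType) (c : nat -> nat) (d : measure_display) (T : measurableType d)
  (P : probability T R) (Rad : seq nat -> T -> nat).
Hypothesis Rad_measurable : forall v k, vtx c v -> measurable (Rad v @^-1` [set k]).
Hypothesis Rad_indep : mutually_independent P Rad (vtx c).

Lemma measurable_Rad v (A : set nat) : vtx c v -> measurable (Rad v @^-1` A).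
Proof.
move=> v_vtx; rewrite -[A]image_id -bigcup_imset1 preimage_bigcup.
by apply: measurable_countable_bigcup => k; exact: Rad_measurable.
Qed.

Lemma prob_avoid (s : seq (seq nat)) t (q : R) :
  uniq s -> (forall v, v \in s -> vtx c v) ->
  (forall v, v \in s -> P (Rad v @^-1` [set t]) = q%:E) ->
  P (\bigcap_(w in [set` s]) Rad w @^-1` [set~ t]) = ((1 - q) ^+ size s)%:E.
Proof.
move=> s_uniq s_vtx s_prob; rewrite (Rad_indep _ s_uniq s_vtx).
rewrite (eq_big_seq (fun _ => (1 - q)%:E)); last first.
  move=> v v_in; rewrite -preimage_setC probability_setC ?s_prob ?EFinB //.
  exact: Rad_measurable (s_vtx _ v_in).
by elim: (s) => [|a s' IH]; rewrite ?big_nil ?expr0 // big_cons IH /= exprS EFinM.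
Qed.

Definition reached_at n v : set T := [set w | Ilevel c (fun u => Rad u w) n v].

Definition reached v : set T := [set w | Iall c (fun u => Rad u w) v].

Lemma measurable_reached_at n v : measurable (reached_at n v).
Proof.
elim: n v => [|n IH] v.
  have [->|v_nil] := eqVneq v [::].
    by have -> : reached_at 0 [::] = setT by apply/seteqP; split.
  have -> : reached_at 0 v = set0.
    by apply/seteqP; split => // w /= /eqP; rewrite (negbTE v_nil).
  exact: measurable0.
have [v_vtx|v_nvtx] := pselect (vtx c v); last first.
  have -> : reached_at n.+1 v = set0 by apply/seteqP; split => // w /= [u _ []].
  exact: measurable0.
have -> : reached_at n.+1 v = \bigcup_(i in [set i | (i <= size v)%N])
    (reached_at n (take i v) `&` Rad (take i v) @^-1` [set k | (size v <= i + k)%N]).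
  apply/seteqP; split => w /=.
    move=> [u u_reached [_ [u_prefix v_size]]].
    move: u_prefix; rewrite prefixE => /eqP v_take.
    have u_size : (size u <= size v)%N by rewrite -v_take size_take; case: ifP => // /ltnW.
    by exists (size u) => //=; rewrite v_take.
  move=> [i /= i_le [i_reached i_rad]]; exists (take i v) => //.
  by do !split; rewrite // ?prefixE size_takel.
apply: bigcup_measurable => i _; apply: measurableI; first exact: IH.
by apply: measurable_Rad; exact: vtx_take.
Qed.

Lemma measurable_survival : measurable (survival c Rad).
Proof.
have -> : survival c Rad =
    ~` \bigcup_(s in [set: seq (seq nat)]) ~` \bigcup_(v in ~` [set` s]) reached v.
  apply/seteqP; split => w /=.
    move=> I_infinite [s _ s_covers]; apply: I_infinite.
    apply: (@sub_finite_set _ _ [set` s]); last by apply/finite_seqP; exists s.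
    move=> v v_reached; apply/negP => v_notin; apply: s_covers.
    by exists v => //=; exact/negP.
  move=> I_cofinite I_finite; apply: I_cofinite.
  have [s s_eq] := (finite_seqP _).1 I_finite.
  by exists s => // [[v /= v_notin]]; rewrite /reached /= s_eq.
apply/measurableC/measurable_countable_bigcup => s.
apply/measurableC/measurable_countable_bigcup => v.
have -> : reached v = \bigcup_n reached_at n v by apply/seteqP; split => w [n _]; exists n.
by apply: bigcupT_measurable => n; exact: measurable_reached_at.
Qed.

Lemma survival_of_radius_chain (r : nat -> nat) w :
  (forall j, 0 < r j)%N -> Rad [::] w = r 0%N ->
  (forall j u, u \in pruned_desc c [::] (\sum_(i < j) r i) ->
     exists2 u', u' \in pruned_desc c u (r j) & Rad u' w = r j.+1) ->
  survival c Rad w.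
Proof.
move=> r_gt0 root_rad extend.
have chain j : exists2 u, u \in pruned_desc c [::] (\sum_(i < j) r i) &
    Rad u w = r j /\ Iall c (fun u => Rad u w) u.
  elim: j => [|j [u u_in [u_rad [n u_reached]]]].
    by exists [::]; rewrite ?big_ord0 ?inE //; split => //; exists 0%N.
  have [u' u'_in u'_rad] := extend _ _ u_in.
  exists u'; first by rewrite big_ord_recr; exact: pruned_desc_trans u_in u'_in.
  split => //; exists n.+1 => //; exists u => //; split.
    exact: pruned_desc_vtx (pruned_desc_vtx (vtx_nil c) u_in) u'_in.
  by rewrite (size_pruned_desc_mem u'_in) u_rad (pruned_desc_prefix u'_in).
have depth_ge j : (j <= \sum_(i < j) r i)%N.
  by elim: j => [|j IH]; rewrite ?big_ord0 // big_ord_recr /= -addn1 leq_add.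
move=> /(finite_seqP _).1 [s s_eq].
have [u u_in [_ u_reached]] := chain (\sum_(x <- s) size x).+1.
have : [set` s] u by rewrite -s_eq.
have size_le v : v \in s -> (size v <= \sum_(x <- s) size x)%N.
  by move=> v_in; rewrite (big_rem v) //= leq_addr.
move/size_le; rewrite (size_pruned_desc_mem u_in) /= add0n.
by move/(leq_trans (depth_ge _)); rewrite ltnn.
Qed.

Definition stalled (r : nat -> nat) j : set T :=
  \bigcup_(u in [set` pruned_desc c [::] (\sum_(i < j) r i)])
    \bigcap_(w in [set` pruned_desc c u (r j)]) Rad w @^-1` [set~ r j.+1].

Lemma measurable_pruned_avoid u r t : vtx c u ->
  measurable (\bigcap_(w in [set` pruned_desc c u r]) Rad w @^-1` [set~ t]).
Proof.
move=> u_vtx; apply: fin_bigcap_measurable; first by apply/finite_seqP; eexists.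
by move=> w /= w_in; apply: measurable_Rad; exact: pruned_desc_vtx u_vtx w_in.
Qed.

Lemma measurable_stalled r j : measurable (stalled r j).
Proof.
apply: fin_bigcup_measurable; first by apply/finite_seqP; eexists.
by move=> u /= u_in; apply: measurable_pruned_avoid; exact: pruned_desc_vtx (vtx_nil c) u_in.
Qed.

Lemma survival_prob_gt0 (r : nat -> nat) (delta : R) :
  (forall j, 0 < r j)%N -> 0 < delta ->
  (delta%:E <= P (Rad [::] @^-1` [set r 0%N]))%E ->
  (forall j, P (stalled r j) <= (delta / 2 ^+ j.+2)%:E)%E ->
  (0 < P (survival c Rad))%E.
Proof.
move=> r_gt0 delta_gt0 root_ge stalled_le.
have m_root : measurable (Rad [::] @^-1` [set r 0%N]) by exact: measurable_Rad.
have m_stalled : measurable (\bigcup_j stalled r j).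
  by apply: bigcupT_measurable => j; exact: measurable_stalled.
set Bad := ~` (Rad [::] @^-1` [set r 0%N]) `|` \bigcup_j stalled r j.
have mBad : measurable Bad by apply: measurableU => //; exact: measurableC.
have stalled_sum : (P (\bigcup_j stalled r j) <= (delta / 2)%:E)%E.
  apply: le_trans (generalized_Boole_inequality _ (fun j => measurable_stalled r j) m_stalled) _.
  have half_ge0 : 0 <= delta / 2 by rewrite divr_ge0 // ltW.
  apply: le_trans (epsilon_trick0 xpredT half_ge0).
  apply: lee_nneseries => [j _ _|j _]; first exact: measure_ge0.
  by rewrite natrX -mulrA -invfM -exprS stalled_le.
have Bad_le : (P Bad <= (1 - delta / 2)%:E)%E.
  have root_bad : (P (~` (Rad [::] @^-1` [set r 0%N])) <= (1 - delta)%:E)%E.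
    by rewrite probability_setC // EFinB leeB.
  apply: le_trans (measureU2 _ (measurableC m_root) m_stalled) _.
  apply: le_trans (leeD root_bad stalled_sum) _.
  by rewrite -EFinD lee_fin; lra.
have good_survives : ~` Bad `<=` survival c Rad.
  move=> w /= /not_orP [/contrapT root_ok never_stalled].
  apply: survival_of_radius_chain => // j u u_in; apply: contrapT => no_ext.
  apply: never_stalled; exists j => //; exists u => // u' u'_in u'_rad.
  by apply: no_ext; exists u'.
have good_prob_gt0 : (0 < P (~` Bad))%E.
  rewrite probability_setC //; move: Bad_le (probability_le1 P mBad).
  case: (P Bad) => [b||] //=; last by rewrite addey.
  by rewrite !lee_fin -EFinB lte_fin => *; lra.
apply: lt_le_trans good_prob_gt0 (le_measure _ _ _ good_survives); rewrite inE.
- exact: measurableC.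
- exact: measurable_survival.
Qed.

Lemma prob_stalled_le (alpha Z : R) (K A D e0 : nat) j :
  (forall v k, vtx c v -> (0 < k)%N ->
     P (Rad v @^-1` [set k]) = (Z / (k.+1%:R `^ alpha))%:E) ->
  0 < Z -> alpha <= A%:R -> (forall v, vtx c v -> 2 <= Mdesc c K v)%N ->
  ((2 * K) ^ A)%:R <= Z * 2 ^+ D ->
  (D + D + sched_depth K e0 j + A * sched_exp K e0 j.+1 + A * e0 + j + 2
     <= 2 ^ sched_exp K e0 j)%N ->
  (P (stalled (sched_radius K e0) j) <= (2 ^- (D + A * e0) / 2 ^+ j.+2)%:E)%E.
Proof.
move=> law Z_gt0 alpha_le branching ZD budget.
have K_gt0 := branching_depth_gt0 branching.
set q := Z / ((sched_radius K e0 j.+1).+1%:R `^ alpha).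
have prob_q v : vtx c v -> P (Rad v @^-1` [set sched_radius K e0 j.+1]) = q%:E.
  by move=> v_vtx; rewrite law // sched_radius_gt0.
have q01 : 0 <= q <= 1.
  have q_ge0 : 0 <= q by rewrite divr_ge0 ?powR_ge0 // ltW.
  have := probability_le1 P (Rad_measurable (sched_radius K e0 j.+1) (vtx_nil c)).
  by rewrite prob_q ?lee_fin ?q_ge0 //; exact: vtx_nil.
have q_ge : 2 ^- (D + A * sched_exp K e0 j.+1) <= q by exact: radius_law_ge.
set n := \prod_(sched_depth K e0 j <= k < sched_depth K e0 j + sched_radius K e0 j)
  minn (c k) 2.
have n_ge : (2 ^ (2 ^ sched_exp K e0 j) <= n)%N.
  have := exp2_le_size_pruned_desc branching (nseq (sched_depth K e0 j) 0%N)
    (2 ^ sched_exp K e0 j).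
  by rewrite size_pruned_desc size_nseq.
apply: le_trans (prob_bigcup_seq_le (x := (1 - q) ^+ n) _ _) _.
- move=> u u_in; apply: measurable_pruned_avoid.
  exact: pruned_desc_vtx (vtx_nil c) u_in.
- move=> u u_in; have u_vtx := pruned_desc_vtx (vtx_nil c) u_in.
  rewrite (@prob_avoid _ _ q) ?pruned_desc_uniq //; last 2 first.
  + by move=> w w_in; exact: pruned_desc_vtx u_vtx w_in.
  + by move=> w w_in; apply: prob_q; exact: pruned_desc_vtx u_vtx w_in.
  by rewrite size_pruned_desc (size_pruned_desc_mem u_in).
rewrite lee_fin -invfM -exprD.
apply: union_avoid_le q01 q_ge (size_pruned_desc_le _ _ _) n_ge _.
by move: budget; rewrite /sched_depth; lia.
Qed.

End Percolation.

Theorem corollary4 (R : realType) (c : nat -> nat)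
  (d : measure_display) (T : measurableType d) (P : probability T R)
  (Rad : seq nat -> T -> nat) (alpha Z : R) :
  1 < alpha -> 0 < Z ->
  (forall v k, vtx c v -> measurable (Rad v @^-1` [set k])) ->
  mutually_independent P Rad (vtx c) ->
  (forall v k, vtx c v -> (0 < k)%N ->
     P (Rad v @^-1` [set k]) = (Z / (k.+1%:R `^ alpha))%:E) ->
  (forall v, vtx c v -> (0 < P (Rad v @^-1` [set 0%N]) < 1)%E) ->
  (exists2 dim : R, 0 < dim & dim_term c @ \oo --> dim%:E) ->
  (0 < P (survival c Rad))%E.
Proof.
move=> _ Z_gt0 Rad_meas Rad_indep law _ dim_gt0.
have [K branching] := branching_of_dim_gt0 dim_gt0.
have K_gt0 := branching_depth_gt0 branching.
pose A := (Num.truncn alpha).+1.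
have alpha_le : alpha <= A%:R by exact/ltW/truncnS_gt.
have [D ZD] := exists_ge_exp2 (((2 * K) ^ A)%:R / Z).
rewrite ler_pdivrMr // mulrC in ZD.
have [e0 budget] := sched_budget K A (D + D).
apply: (survival_prob_gt0 Rad_meas (r := sched_radius K e0) (delta := 2 ^- (D + A * e0))).
- by move=> j; exact: sched_radius_gt0.
- by rewrite invr_gt0 exprn_gt0.
- rewrite law ?sched_radius_gt0 ?lee_fin // /sched_radius /sched_exp muln0 addn0.
  exact: radius_law_ge.
- move=> j; apply: (prob_stalled_le Rad_meas Rad_indep law Z_gt0 alpha_le branching ZD).
  by have := budget j; lia.
Qed.
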